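(* Let $\mathcal{H}$ be a connected $k$-uniform hypergraph on $n$ vertices with degrees $d_1,\dots,d_n$, and let $b_{i}>0$ for each $1\leq i\leq n$. For $1\le p\le n$ put \[ b_{p}^{\prime}=b_{p}^{-(k-1)}\sum_{\{p,p_{2},\cdots,p_{k}\}\in E(\mathcal{H})}b_{p_{2}}\cdots b_{p_{k}}. \] Then \[ \rho(\mathcal{Q}(\mathcal{H}))\leq\max_{e\in E(\mathcal{H})}\max_{\{i,j\}\subseteq e}\frac{d_{i}+d_{j}+\sqrt{(d_{i}-d_{j})^{2}+4b_{i}^{\prime}b_{j}^{\prime}}}{2}. \]
   Context: A $k$-uniform hypergraph $\mathcal{H}$ on vertex set $[n]$ has edges that are $k$-element subsets of $[n]$; $d_i$ is the number of edges containing vertex $i$. The sum over $\{p,p_2,\dots,p_k\}\in E(\mathcal{H})$ runs over the edges containing $p$, with $p_2,\dots,p_k$ the other vertices of that edge. The adjacency tensor $\mathcal{A}(\mathcal{H})$ has entries $\mathcal{A}_{i_1\cdots i_k}=\frac{1}{(k-1)!}$ if $\{i_1,\dots,i_k\}\in E(\mathcal{H})$ and $0$ otherwise; $\mathcal{D}(\mathcal{H})$ is the diagonal tensor with $\mathcal{D}_{i\cdots i}=d_i$; $\mathcal{Q}(\mathcal{H})=\mathcal{D}(\mathcal{H})+\mathcal{A}(\mathcal{H})$ is the signless Laplacian tensor. For a tensor $\mathcal{T}$ and $x\in\mathbb{C}^n$, $(\mathcal{T}x)_i=\sum_{i_2,\dots,i_k}\mathcal{T}_{ii_2\cdots i_k}x_{i_2}\cdots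 x_{i_k}$; $\lambda$ is an eigenvalue if $\mathcal{T}x=\lambda x^{[k-1]}$ for some nonzero $x$, where $x^{[k-1]}=(x_1^{k-1},\dots,x_n^{k-1})^T$; $\rho(\mathcal{T})$ is the maximum modulus of eigenvalues. *)

From HB Require Import structures.
From mathcomp Require Import all_boot all_order all_algebra.
From mathcomp Require Import complex.
From mathcomp Require Import classical_sets reals.
Set Implicit Arguments. Unset Strict Implicit. Unset Printing Implicit Defensive.
Import Order.TTheory GRing.Theory Num.Theory.
Local Open Scope ring_scope.

Definition kuniform (n k : nat) (E : {set {set 'I_n}}) : Prop :=
  forall e, e \in E -> #|e| = k.

Arguments kuniform {n} k E.

Definition hadj (n : nat) (E : {set {set 'I_n}}) : rel 'I_n :=
  fun u v => [exists e in E, (u \in e) && (v \in e)].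

Definition hconnected (n : nat) (E : {set {set 'I_n}}) : Prop :=
  forall u v : 'I_n, connect (hadj E) u v.

Definition hdeg (n : nat) (E : {set {set 'I_n}}) (i : 'I_n) : nat :=
  #|[set e in E | i \in e]|.

(* An order-k, dimension-n tensor: entry T_{i i_2 ... i_k} = T i t
   where t : 'I_(k-1) -> 'I_n lists (i_2,...,i_k). *)
Definition tensor (R : Type) (n k : nat) := 'I_n -> {ffun 'I_k.-1 -> 'I_n} -> R.

Definition adj_tensor (R : fieldType) (n k : nat) (E : {set {set 'I_n}})
  : tensor R n k :=
  fun i t => if (i |: [set t j | j : 'I_k.-1]) \in E then ((k.-1)`!%:R)^-1 else 0.

Definition deg_tensor (R : fieldType) (n k : nat) (E : {set {set 'I_n}})
  : tensor R n k :=
  fun i t => if [forall j, t j == i] then (hdeg E i)%:R else 0.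

Arguments adj_tensor R {n} k E.
Arguments deg_tensor R {n} k E.

Definition signless_laplacian (R : fieldType) (n k : nat) (E : {set {set 'I_n}})
  : tensor R n k :=
  fun i t => deg_tensor R k E i t + adj_tensor R k E i t.

Arguments signless_laplacian R {n} k E.

Definition tensor_apply (R : fieldType) (n k : nat) (T : tensor R n k)
  (x : 'I_n -> R) (i : 'I_n) : R :=
  \sum_(t : {ffun 'I_k.-1 -> 'I_n}) T i t * \prod_(j : 'I_k.-1) x (t j).

Definition is_eigenvalue (R : rcfType) (n k : nat) (T : tensor R[i] n k)
  (lam : R[i]) : Prop :=
  exists x : 'I_n -> R[i], (exists i, x i != 0) /\
    forall i, tensor_apply T x i = lam * x i ^+ k.-1.

Definition spectral_radius (R : realType) (n k : nat) (T : tensor R[i] n k) : R :=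
  sup [set r : R | exists lam, is_eigenvalue T lam /\ r = ComplexField.Normc.normc lam].

Definition bprime (R : fieldType) (n k : nat) (E : {set {set 'I_n}})
  (b : 'I_n -> R) (p : 'I_n) : R :=
  (b p ^+ k.-1)^-1 * \sum_(e in E | p \in e) \prod_(q in e | q != p) b q.

Arguments bprime {R n} k E b p.

Definition theorem_bound (R : rcfType) (n k : nat) (E : {set {set 'I_n}})
  (b : 'I_n -> R) : R :=
  \big[Num.max/0]_(e in E) \big[Num.max/0]_(i in e) \big[Num.max/0]_(j in e | i != j)
    (((hdeg E i)%:R + (hdeg E j)%:R
      + Num.sqrt (((hdeg E i)%:R - (hdeg E j)%:R) ^+ 2
                  + 4 * bprime k E b i * bprime k E b j)) / 2).

(* For an eigenpair (lam, x) of Q put y_i = |x_i| / b_i. Row p of the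
   eigenequation gives |lam - d_p| b_p^(k-1) y_p^(k-1) <= sum over edges e
   containing p of prod_(q in e, q <> p) b_q y_q. Take p maximising y and q
   maximising y among the neighbours of p: then
   |lam - d_p| y_p^(k-1) <= b'_p y_q^(k-1) and |lam - d_q| y_q^(k-1) <= b'_q y_p^(k-1),
   whence |lam - d_p| |lam - d_q| <= b'_p b'_q. As |lam| <= |lam - d_v| + d_v,
   |lam| is at most the larger root of (t - d_p)(t - d_q) = b'_p b'_q, which is
   the term of the bound for p, q and an edge containing both. *)

From HB Require Import structures.
From mathcomp Require Import all_boot all_order all_algebra.
From mathcomp Require Import complex.
From mathcomp Require Import classical_sets reals boolp.
From mathcomp Require Import ring lra.
Set Implicit Arguments. Unset Strict Implicit. Unset Printing Implicit Defensive.
Import Order.TTheory GRing.Theory Num.Theory.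
Local Open Scope ring_scope.

Section EdgeEnumerations.
Variables (n k : nat) (e : {set 'I_n}) (p : 'I_n).
Hypotheses (k_gt0 : (0 < k)%N) (card_e : #|e| = k) (p_e : p \in e).

Definition ffun_image (t : {ffun 'I_k.-1 -> 'I_n}) := [set t j | j : 'I_k.-1].

Lemma ffun_imageE (t : {ffun 'I_k.-1 -> 'I_n}) : ffun_image t = t @: [set: 'I_k.-1].
Proof. by apply/setP => z; apply/imsetP/imsetP => -[j _ ->]; exists j. Qed.

Lemma card_edgeD1 : #|e :\ p| = k.-1.
Proof. by move: (cardsD1 p e); rewrite p_e card_e add1n => ->. Qed.

Lemma setU1_ffun_imageP (t : {ffun 'I_k.-1 -> 'I_n}) :
  reflect (injective t /\ ffun_image t = e :\ p) (p |: ffun_image t == e).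
Proof.
apply: (iffP eqP) => [def_e | [_ ->]]; last by rewrite finset.setD1K.
have le_img : (#|ffun_image t| <= k.-1)%N.
  by rewrite ffun_imageE (leq_trans (leq_imset_card _ _)) // cardsT card_ord.
have := cardsU1 p (ffun_image t); rewrite def_e card_e.
have [p_img | p_img] := boolP (p \in ffun_image t).
  by rewrite /= add0n => card_img; move: le_img; rewrite -card_img leqNgt ltn_predL k_gt0.
rewrite /= add1n => card_img; split; last by rewrite -def_e finset.setU1K.
have : #|t @: [set: 'I_k.-1]| == #|[set: 'I_k.-1]|.
  by rewrite -ffun_imageE cardsT card_ord card_img.
by move/imset_injP => t_inj x y /t_inj; apply; rewrite inE.
Qed.

Lemma card_ffun_edge_enumerations :
  #|[set t | p |: ffun_image t == e]| = (k.-1)`!.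
Proof.
have := card_inj_ffuns_on 'I_k.-1 (mem (e :\ p)).
rewrite card_ord -[#|mem _|]/#|e :\ p| card_edgeD1 ffactnn => <-.
apply: eq_card => t; rewrite !inE; apply/setU1_ffun_imageP/andP.
  move=> [t_inj img_t]; split; last exact/injectiveP.
  by apply/ffun_onP => j; rewrite -img_t; apply: imset_f.
move=> [/ffun_onP t_on /injectiveP t_inj]; split => //.
apply/eqP; rewrite eqEcard card_edgeD1 ffun_imageE card_imset // cardsT card_ord.
by rewrite leqnn andbT; apply/fintype.subsetP => _ /imsetP [j _ ->]; apply: t_on.
Qed.

End EdgeEnumerations.

Arguments ffun_image {n} k t.

Section TensorApply.
Variables (n k : nat) (E : {set {set 'I_n}}).

Lemma deg_tensor_apply (F : fieldType) (x : 'I_n -> F) p :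
  tensor_apply (deg_tensor F k E) x p = (hdeg E p)%:R * x p ^+ k.-1.
Proof.
rewrite /tensor_apply (bigD1 [ffun=> p]) //= [X in _ + X]big1 ?addr0 => [|t t_p].
  rewrite /deg_tensor; case: ifPn => [_ | /forallPn [j]]; last by rewrite ffunE eqxx.
  by under eq_bigr do rewrite ffunE; rewrite prodr_const card_ord.
rewrite /deg_tensor; case: ifPn; rewrite ?mul0r // => /forallP t_const.
by case/eqP: t_p; apply/ffunP => j; rewrite ffunE; apply/eqP.
Qed.

Hypotheses (k_gt0 : (0 < k)%N) (E_unif : kuniform k E).

Lemma adj_tensor_apply (F : numFieldType) (x : 'I_n -> F) p :
  tensor_apply (adj_tensor F k E) x p =
  \sum_(e in E | p \in e) \prod_(q in e | q != p) x q.
Proof.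
(* Each edge containing p is listed by exactly (k-1)! tuples, which cancels the weight. *)
rewrite /tensor_apply /adj_tensor; set c := ((k.-1)`!%:R : F)^-1.
transitivity (\sum_(t | p |: ffun_image k t \in E) c * \prod_j x (t j)).
  by rewrite [RHS]big_mkcond; apply: eq_bigr => t _; case: ifP; rewrite ?mul0r.
rewrite (partition_big (fun t => p |: ffun_image k t) (fun e => (e \in E) && (p \in e)))
  => [|t ->]; last by rewrite setU11.
apply: eq_bigr => e /andP [eE pe].
transitivity (\sum_(t | p |: ffun_image k t == e) c * \prod_(q in e | q != p) x q).
  apply: eq_big => [t | t /andP [_ def_e]].
    by case: eqP => [->|]; rewrite ?andbF ?eE.
  have /(setU1_ffun_imageP k_gt0 (E_unif eE) pe) [t_inj img_t] := def_e.
  congr (_ * _); rewrite (eq_bigl (mem (e :\ p))) => [|q]; last by rewrite !inE andbC.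
  rewrite -img_t ffun_imageE big_imset => [|i j _ _ /t_inj //].
  by apply: eq_bigl => j; rewrite inE.
rewrite sumr_const -cardsE (card_ffun_edge_enumerations k_gt0 (E_unif eE) pe).
by rewrite -mulr_natr mulrAC mulVf ?mul1r // pnatr_eq0 -lt0n fact_gt0.
Qed.

Lemma signless_laplacian_apply (F : numFieldType) (x : 'I_n -> F) p :
  tensor_apply (signless_laplacian F k E) x p =
  (hdeg E p)%:R * x p ^+ k.-1 + \sum_(e in E | p \in e) \prod_(q in e | q != p) x q.
Proof.
rewrite -deg_tensor_apply -adj_tensor_apply /tensor_apply -big_split /=.
by apply: eq_bigr => t _; rewrite -mulrDl.
Qed.

End TensorApply.

Lemma signless_laplacian_eigen_norm_le (F : numFieldType) n k (E : {set {set 'I_n}})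
    (x : 'I_n -> F) lam p :
  (0 < k)%N -> kuniform k E ->
  tensor_apply (signless_laplacian F k E) x p = lam * x p ^+ k.-1 ->
  `|lam - (hdeg E p)%:R| * `|x p| ^+ k.-1 <=
  \sum_(e in E | p \in e) \prod_(q in e | q != p) `|x q|.
Proof.
move=> k_gt0 E_unif; rewrite signless_laplacian_apply // => eig_p.
rewrite -normrX -normrM mulrBl -eig_p addrAC subrr add0r.
by apply: le_trans (ler_norm_sum _ _ _) _; apply: ler_sum => e _; rewrite normr_prod.
Qed.

Lemma le_quadratic_bound (R : rcfType) (r dp dq cp cq bp bq : R) :
  0 <= bp * bq -> r <= cp + dp -> r <= cq + dq -> cp * cq <= bp * bq ->
  r <= (dp + dq + Num.sqrt ((dp - dq) ^+ 2 + 4 * bp * bq)) / 2.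
Proof.
move=> bpq_ge0 r_le_p r_le_q cpq_le.
have disc_ge0 : 0 <= (dp - dq) ^+ 2 + 4 * bp * bq by rewrite -mulrA addr_ge0 ?sqr_ge0 // mulr_ge0.
set s := Num.sqrt _; have s_ge0 : 0 <= s by rewrite sqrtr_ge0.
have s2 : s ^+ 2 = (dp - dq) ^+ 2 + 4 * bp * bq by rewrite sqr_sqrtr.
have s_ge_dpq : dp - dq <= s by nra.
have s_ge_dqp : dq - dp <= s by nra.
rewrite ler_pdivlMr //.
(* Beyond both d's, r lies below the larger root of (t - dp)(t - dq) = bp bq. *)
have [r_le_dp | dp_lt_r] := lerP r dp; first by lra.
have [r_le_dq | dq_lt_r] := lerP r dq; first by lra.
have : (r - dp) * (r - dq) <= cp * cq by apply: ler_pM; lra.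
nra.
Qed.

Lemma theorem_bound_ge0 (R : rcfType) n k (E : {set {set 'I_n}}) (b : 'I_n -> R) :
  0 <= theorem_bound k E b.
Proof. exact: bigmax_ge_id. Qed.

Lemma le_theorem_bound (R : rcfType) n k (E : {set {set 'I_n}}) (b : 'I_n -> R) e i j :
  e \in E -> i \in e -> j \in e -> i != j ->
  ((hdeg E i)%:R + (hdeg E j)%:R
    + Num.sqrt (((hdeg E i)%:R - (hdeg E j)%:R) ^+ 2
                + 4 * bprime k E b i * bprime k E b j)) / 2
  <= theorem_bound k E b.
Proof.
move=> eE ie je ij; rewrite /theorem_bound.
apply: le_trans (le_bigmax_cond _ _ eE); apply: le_trans (le_bigmax_cond _ _ ie).
by apply: le_bigmax_cond; rewrite je ij.
Qed.

Section MaximalRatio.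
Variables (R : rcfType) (n k : nat) (E : {set {set 'I_n}}) (b a c : 'I_n -> R) (r : R).
Hypotheses (k_gt1 : (1 < k)%N) (E_unif : kuniform k E).
Hypotheses (b_gt0 : forall i, 0 < b i) (a_ge0 : forall i, 0 <= a i) (c_ge0 : forall i, 0 <= c i).
Hypothesis c_a_le : forall p,
  c p * a p ^+ k.-1 <= \sum_(e in E | p \in e) \prod_(q in e | q != p) a q.
Hypothesis r_le : forall p, r <= c p + (hdeg E p)%:R.

Let y i := a i / b i.

Let y_ge0 i : 0 <= y i.
Proof. by rewrite divr_ge0 // ltW. Qed.

Let a_def i : a i = b i * y i.
Proof. by rewrite mulrCA mulfV ?mulr1 // gt_eqF. Qed.

Lemma bprime_ge0 p : 0 <= bprime k E b p.
Proof.
apply: mulr_ge0; first by rewrite invr_ge0 exprn_ge0 // ltW.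
by apply: sumr_ge0 => e _; apply: prodr_ge0 => q _; apply: ltW.
Qed.

Lemma ratio_neighbour_le p M : 0 <= M ->
    (forall q, hadj E p q && (q != p) -> y q <= M) ->
  c p * y p ^+ k.-1 <= bprime k E b p * M ^+ k.-1.
Proof.
move=> M_ge0 y_le_M; have bp_gt0 : 0 < b p ^+ k.-1 by rewrite exprn_gt0.
rewrite -(ler_pM2l bp_gt0) mulrCA -exprMn -a_def mulrA /bprime mulrA.
rewrite mulfV ?gt_eqF // mul1r mulr_suml; apply: le_trans (c_a_le p) _.
apply: ler_sum => e /andP [eE pe].
have -> : (\prod_(q in e | q != p) b q) * M ^+ k.-1 = \prod_(q in e | q != p) (b q * M).
  rewrite big_split /= -(card_edgeD1 (E_unif eE) pe) -prodr_const.
  by congr (_ * _); apply: eq_bigl => q; rewrite !inE andbC.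
apply: ler_prod => q /andP [qe qp]; rewrite a_ge0 a_def ler_pM2l //.
by apply: y_le_M; rewrite qp andbT; apply/existsP; exists e; rewrite eE pe qe.
Qed.

Lemma neighbour_pair_mul_le p q :
    (forall i, y i <= y p) -> 0 < y p ->
    (forall j, hadj E p j && (j != p) -> y j <= y q) ->
  c p * c q <= bprime k E b p * bprime k E b q.
Proof.
move=> y_le_yp yp_gt0 y_nb_le.
have m_gt0 : (0 < k.-1)%N by rewrite -ltnS prednK // ltnW.
have ypm_gt0 : 0 < y p ^+ k.-1 by rewrite exprn_gt0.
have le_p := @ratio_neighbour_le p (y q) (y_ge0 q) y_nb_le.
have le_q := @ratio_neighbour_le q (y p) (y_ge0 p) (fun i _ => y_le_yp i).
have [yq_gt0 | yq_le0] := ltP 0 (y q); last first.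
  have cp0 : c p = 0.
    apply/le_anti; rewrite c_ge0 andbT -(pmulr_lle0 _ ypm_gt0).
    have yq0 : y q = 0 by apply/le_anti; rewrite yq_le0 y_ge0.
    by apply: le_trans le_p _; rewrite yq0 expr0n gtn_eqF ?mulr0.
  by rewrite cp0 mul0r mulr_ge0 ?bprime_ge0.
have yqm_gt0 : 0 < y q ^+ k.-1 by rewrite exprn_gt0.
have := ler_pM (mulr_ge0 (c_ge0 p) (ltW ypm_gt0)) (mulr_ge0 (c_ge0 q) (ltW yqm_gt0)) le_p le_q.
by rewrite mulrACA [X in _ <= X]mulrACA [y q ^+ _ * _]mulrC ler_pM2r ?mulr_gt0.
Qed.

Lemma eigen_inequalities_le_bound : (exists i, a i != 0) -> r <= theorem_bound k E b.
Proof.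
case=> i0 a_i0; have [p _ y_le_yp] := @arg_maxP _ _ _ i0 xpredT y isT.
have yp_gt0 : 0 < y p.
  by apply: lt_le_trans (y_le_yp i0 isT); rewrite divr_gt0 // lt_def a_i0 a_ge0.
have [/existsP [e0 /andP [e0E pe0]] | isolated] := boolP [exists e in E, p \in e].
  have : (0 < #|e0 :\ p|)%N by rewrite (card_edgeD1 (E_unif e0E) pe0) -ltnS prednK // ltnW.
  case/card_gt0P => q0; rewrite in_setD1 => /andP [q0p q0e].
  have nb_q0 : hadj E p q0 && (q0 != p).
    by rewrite q0p andbT; apply/existsP; exists e0; rewrite e0E pe0 q0e.
  have [q /andP [/existsP [e /andP [eE /andP [pe qe]]] qp] y_nb_le] :=
    @arg_maxP _ _ _ q0 (fun j => hadj E p j && (j != p)) y nb_q0.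
  have p_neq_q : p != q by rewrite eq_sym.
  apply: le_trans (le_theorem_bound k b eE pe qe p_neq_q).
  apply: le_quadratic_bound (r_le p) (r_le q) _; first by rewrite mulr_ge0 ?bprime_ge0.
  exact: neighbour_pair_mul_le (fun i => y_le_yp i isT) yp_gt0 y_nb_le.
have no_edge e : (e \in E) && (p \in e) = false.
  by apply/negbTE; apply: contra isolated => ?; apply/existsP; exists e.
have : c p * a p ^+ k.-1 <= 0 by apply: le_trans (c_a_le p) _; rewrite big_pred0.
have ap_gt0 : 0 < a p by rewrite a_def mulr_gt0.
rewrite pmulr_lle0 ?exprn_gt0 // => cp_le0.
have deg0 : hdeg E p = 0%N by apply: eq_card0 => e; rewrite inE no_edge.
apply: le_trans (r_le p) _; rewrite deg0 addr0.
exact: le_trans cp_le0 (theorem_bound_ge0 _ _ _).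
Qed.

End MaximalRatio.

Lemma normc_eigenvalue_le (R : rcfType) n k (E : {set {set 'I_n}}) (b : 'I_n -> R) lam :
  (1 < k)%N -> kuniform k E -> (forall i, 0 < b i) ->
  is_eigenvalue (signless_laplacian R[i] k E) lam ->
  Normc.normc lam <= theorem_bound k E b.
Proof.
move=> k_gt1 E_unif b_gt0 [x [[i0 x_i0] eig_x]].
have normcE (z : R[i]) : `|z| = (Normc.normc z)%:C%C by case: z.
have normc_ge0 (z : R[i]) : 0 <= Normc.normc z by rewrite -ler0c -normcE.
apply: (@eigen_inequalities_le_bound _ _ _ _ b (fun i => Normc.normc (x i))
                     (fun p => Normc.normc (lam - (hdeg E p)%:R))) => // [p | p | ].
- have := signless_laplacian_eigen_norm_le (ltnW k_gt1) E_unif (eig_x p).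
  rewrite !normcE -rmorphXn -rmorphM.
  under eq_bigr do under eq_bigr do rewrite normcE.
  by under eq_bigr do rewrite -rmorph_prod; rewrite -rmorph_sum lecR.
- rewrite -lecR rmorphD -!normcE rmorph_nat -[X in `|X|](subrK (hdeg E p)%:R).
  by apply: le_trans (ler_normD _ _) _; rewrite normr_nat.
- by exists i0; apply: contra x_i0 => /eqP /Normc.eq0_normc ->.
Qed.

Theorem theorem2p2 (R : realType) (n k : nat) (E : {set {set 'I_n}})
  (b : 'I_n -> R) :
  (2 <= k)%N -> kuniform k E -> hconnected E ->
  (forall i, 0 < b i) ->
  spectral_radius (signless_laplacian R[i] k E)
    <= theorem_bound k E b.
Proof.
move=> k_gt1 E_unif _ b_gt0; rewrite /spectral_radius.
set S := (X in sup X <= _).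
have S_le : ubound S (theorem_bound k E b).
  by move=> _ [lam [eig ->]]; apply: normc_eigenvalue_le.
have [S_ne0 | S_eq0] := pselect (S !=set0)%classic; first exact: ge_sup.
rewrite (_ : S = set0%classic) ?sup0 ?theorem_bound_ge0 //.
by apply/seteqP; split => // r Sr; apply: S_eq0; exists r.
Qed.
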